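(* The category of abelian group objects in $\mathbf{DPAlg}_R$ (equivalently, by the preceding result, $DP$ algebras with zero multiplication, with $DP$ algebra maps) is equivalent to the category of left $U(0)$-modules. Under this equivalence a $DP$ algebra $A$ with zero product corresponds to its underlying $R$-module with $\phi_p$ acting as $\gamma_p$ for each prime $p$, and conversely a left $U(0)$-module $M$ becomes a $DP$ algebra with zero product and $\gamma_n=\phi_n$ (action of the element $\phi_n\in U(0)$) for all $n\ge1$.
   Context: Fix a commutative unital ring $R$; unadorned $\otimes$ means $\otimes_R$. An ''algebra'' means a commutative, not necessarily unital, $R$-algebra. A $DP$ algebra is an algebra $A$ with maps $\gamma_n:A\to A$ ($n\ge1$) such that for all $a,b\in A$, $r\in R$, $m,n\ge1$: $\gamma_1(a)=a$; $\gamma_n(a+b)=\gamma_n(a)+\sum_{i+j=n,\,i,j\ge1}\gamma_i(a)\gamma_j(b)+\gamma_n(b)$; $\gamma_n(ab)=a^n\gamma_n(b)$; $\gamma_n(rb)=r^n\gamma_n(b)$; $\gamma_m(a)\gamma_n(a)=\frac{(m+n)!}{m!\,n!}\gamma_{m+n}(a)$; $\gamma_m(\gamma_n(a))=\frac{(mn)!}{m!(n!)^m}\gamma_{mn}(a)$. $\mathbf{DPAlg}_R$ is the category of $DP$ algebras and algebra maps commuting with all $\gamma_n$. $U(0)$ is the (generally non-commutative, non-$R$-central) unital ring generated by $R$ and symbols $\phi_p$, one for each prime $p$, which commute with one another, subject to the relations $p\phi_p=0$ and $\phi_p r=r^p\phi_p$ for $r\in R$. Set $\phi_1=1$, $\phi_{p^e}=\phi_p^e$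 for $p$ prime and $e\ge1$, and $\phi_n=0$ if $n>1$ is not a prime power. Thus a left $U(0)$-module is an $R$-module $M$ with additive endomorphisms $\phi_p$ ($p$ prime), pairwise commuting, with $p\phi_p=0$ and $\phi_p(rx)=r^p\phi_p(x)$. *)

From HB Require Import structures.
From mathcomp Require Import all_boot all_algebra.
Set Implicit Arguments. Unset Strict Implicit. Unset Printing Implicit Defensive.
Import GRing.Theory.
Local Open Scope ring_scope.

Section DP.
Variable R : comPzRingType.

(* n-fold product a^n (n >= 1) in a possibly non-unital algebra with product mul *)
Definition npow (A : Type) (mul : A -> A -> A) (a : A) (n : nat) : A :=
  iter n.-1 (mul a) a.

(* A commutative, not necessarily unital, R-algebra structure mul on the
   R-module A, together with divided powers gamma (gamma n for n >= 1;
   gamma 0 is irrelevant). *)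
Definition isDPAlg (A : lmodType R) (mul : A -> A -> A) (gamma : nat -> A -> A)
  : Prop :=
  [/\ (forall a b, mul a b = mul b a),
      (forall a b c, mul a (mul b c) = mul (mul a b) c),
      (forall a b c, mul (a + b) c = mul a c + mul b c),
      (forall (r : R) a b, mul (r *: a) b = r *: mul a b)
    & [/\ (forall a, gamma 1%N a = a) /\
          (forall (n : nat) a b, (0 < n)%N ->
             gamma n (a + b) = gamma n a
               + \sum_(1 <= i < n) mul (gamma i a) (gamma (n - i)%N b)
               + gamma n b),
          (forall (n : nat) a b, (0 < n)%N ->
             gamma n (mul a b) = mul (npow mul a n) (gamma n b)),
          (forall (n : nat) (r : R) b, (0 < n)%N -> gamma n (r *: b) = r ^+ n *: gamma n b),
          (forall (m n : nat) a, (0 < m)%N -> (0 < n)%N ->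
             mul (gamma m a) (gamma n a) = gamma (m + n)%N a *+ 'C(m + n, m))
        & (forall (m n : nat) a, (0 < m)%N -> (0 < n)%N ->
             gamma m (gamma n a) =
               gamma (m * n)%N a *+ ((m * n)`! %/ (m`! * (n`! ^ m))))]].

Definition zmul (A : lmodType R) : A -> A -> A := fun _ _ => 0.

Definition isDPMap (A B : lmodType R) (mulA : A -> A -> A) (gA : nat -> A -> A)
  (mulB : B -> B -> B) (gB : nat -> B -> B) (f : A -> B) : Prop :=
  [/\ (forall a b, f (a + b) = f a + f b),
      (forall (r : R) a, f (r *: a) = r *: f a),
      (forall a b, f (mulA a b) = mulB (f a) (f b))
    & (forall (n : nat) a, (0 < n)%N -> f (gA n a) = gB n (f a))].

(* left U(0)-modules: an R-module M with operators phi p for p prime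
   (the values of phi at non-primes are irrelevant) *)
Definition isU0Mod (M : lmodType R) (phi : nat -> M -> M) : Prop :=
  [/\ (forall p x y, prime p -> phi p (x + y) = phi p x + phi p y),
      (forall p q x, prime p -> prime q -> phi p (phi q x) = phi q (phi p x)),
      (forall p x, prime p -> phi p x *+ p = 0)
    & (forall p (r : R) x, prime p -> phi p (r *: x) = r ^+ p *: phi p x)].

Definition isU0Map (M N : lmodType R) (phiM : nat -> M -> M) (phiN : nat -> N -> N)
  (f : M -> N) : Prop :=
  [/\ (forall x y, f (x + y) = f x + f y),
      (forall (r : R) x, f (r *: x) = r *: f x)
    & (forall p x, prime p -> f (phiM p x) = phiN p (f x))].

(* action of the element phi_n of U(0): phi_1 = 1, phi_{p^e} = phi_p^e,
   phi_n = 0 if n > 1 is not a prime power *)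
Definition phin (M : lmodType R) (phi : nat -> M -> M) (n : nat) (x : M) : M :=
  if n == 1%N then x
  else if (1 < n)%N && (n == pdiv n ^ logn (pdiv n) n)%N
       then iter (logn (pdiv n) n) (phi (pdiv n)) x
       else 0.

End DP.

(* With zero multiplication the DP axioms say that each gamma_n is additive and n-semilinear,
   that C(m+n, m) gamma_(m+n) = 0, and that gamma_m o gamma_n = c gamma_(mn) with
   c = (mn)! / (m! (n!)^m).  Taking m = 1 gives n gamma_n = 0.  Since c = 1 mod p when n = p^f,
   gamma_(p^e) is the e-th iterate of gamma_p; and when n is not a prime power, gamma_n is killed
   by n and, for each prime p | n, by a number that is 1 mod p, so it vanishes.  Hence gamma is
   determined by the operators gamma_p, which satisfy the U(0) relations.  Conversely
   phi_(p^e) := phi_p^e satisfies the DP axioms because p divides C(p^e, m) for 0 < m < p^e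
   and p phi_p = 0. *)

From mathcomp Require Import all_boot all_algebra.
From mathcomp Require Import zify ring.
Set Implicit Arguments. Unset Strict Implicit. Unset Printing Implicit Defensive.
Import GRing.Theory.

Lemma prime_dvd_bin_pfactor p e m : prime p -> 0 < m < p ^ e -> p %| 'C(p ^ e, m).
Proof.
move=> p_pr /andP[m_gt0 m_lt].
have := mul_bin_diag (p ^ e) m.-1; rewrite prednK // => pe_bin.
apply/negPn/negP => p_ndvd.
have pe_cop : coprime (p ^ e) 'C(p ^ e, m).
  by rewrite coprime_sym coprimeXr // coprime_sym prime_coprime.
have : p ^ e %| 'C(p ^ e, m) * m by rewrite mulnC -pe_bin dvdn_mulr.
by rewrite Gauss_dvdr // => /(dvdn_leq m_gt0); lia.
Qed.

Lemma bin_pfactor_pred_mod p f k : prime p -> 0 < k ->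
  'C(k * p ^ f - 1, p ^ f - 1) = 1 %[mod p].
Proof.
move=> p_pr; set q := p ^ f; have q_gt0 : 0 < q by rewrite expn_gt0 prime_gt0.
elim: k => // -[_ _|k IHk _]; first by rewrite mul1n binn.
have -> : k.+2 * q - 1 = q + (k.+1 * q - 1).
  by rewrite [k.+2 * q]mulSn; have := leq_pmull q (ltn0Sn k); lia.
rewrite -binomial.Vandermonde big_ord_recl /= bin0 mul1n subn0 -IHk //.
suff /dvdnP[c ->] : p %| \sum_(i < q - 1) 'C(q, bump 0 i) * 'C(k.+1 * q - 1, q - 1 - bump 0 i).
  by rewrite addnC modnMDl.
apply: dvdn_sum => i _; apply/dvdn_mulr/prime_dvd_bin_pfactor => //.
by rewrite /bump /=; have := ltn_ord i; lia.
Qed.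

Definition comp_coef n m := \prod_(i < m) 'C(i.+1 * n - 1, n - 1).

Lemma comp_coefS n m : comp_coef n m.+1 = comp_coef n m * 'C(m.+1 * n - 1, n - 1).
Proof. by rewrite /comp_coef big_ord_recr. Qed.

Lemma fact_mul_comp_coef n m : 0 < n -> (m * n)`! = m`! * n`! ^ m * comp_coef n m.
Proof.
move=> n_gt0; elim: m => [|m IHm]; first by rewrite /comp_coef big_ord0.
set N := m.+1 * n; have n_le_N : n <= N by rewrite /N mulSn leq_addr.
have binN : 'C(N, n) = m.+1 * 'C(N - 1, n - 1).
  have := mul_bin_diag N n.-1; rewrite prednK // !subn1 => diagN.
  apply/eqP; rewrite -(eqn_pmul2l n_gt0) -diagN; apply/eqP; rewrite /N; ring.
rewrite -(bin_fact n_le_N) binN (_ : N - n = m * n) ?IHm; last first.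
  by rewrite /N mulSn addnC addnK.
rewrite comp_coefS factS expnS; ring.
Qed.

Lemma comp_coefE n m : 0 < n -> (m * n)`! %/ (m`! * n`! ^ m) = comp_coef n m.
Proof.
by move=> n_gt0; rewrite fact_mul_comp_coef // mulKn // muln_gt0 fact_gt0 expn_gt0 fact_gt0.
Qed.

Lemma comp_coef_pfactor_mod p f m : prime p -> comp_coef (p ^ f) m = 1 %[mod p].
Proof.
move=> p_pr; elim: m => [|m IHm]; first by rewrite /comp_coef big_ord0.
by rewrite comp_coefS -modnMml IHm modnMml mul1n bin_pfactor_pred_mod.
Qed.

Lemma comp_coef1n m : comp_coef 1 m = 1.
Proof. by rewrite /comp_coef big1 // => i _; rewrite subnn bin0. Qed.

Lemma comp_coefn1 n : comp_coef n 1 = 1.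
Proof. by rewrite /comp_coef big_ord1 mul1n binn. Qed.

Section Torsion.
Variable V : zmodType.
Local Open Scope ring_scope.
Implicit Types (z : V) (a b c p : nat).

Lemma mulrn_gcd_eq0 z a b : z *+ a = 0 -> z *+ b = 0 -> z *+ gcdn a b = 0.
Proof.
have [->|a_gt0] := posnP a; first by rewrite gcd0n.
move=> za zb; have [u v def_ua _] := egcdnP b a_gt0.
have : z *+ (u * a) = z *+ (v * b + gcdn a b) by rewrite def_ua.
by rewrite mulrnDr !(mulnC _ a) !(mulnC _ b) !mulrnA za zb !mul0rn add0r => <-.
Qed.

Lemma mulrn_coprime_eq0 z a b : coprime a b -> z *+ a = 0 -> z *+ b = 0 -> z = 0.
Proof. by move=> /eqP cop_ab za zb; have := mulrn_gcd_eq0 za zb; rewrite cop_ab. Qed.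

Lemma mulrn_modn z p c : z *+ p = 0 -> z *+ (c %% p) = z *+ c.
Proof. by move=> zp; rewrite {2}(divn_eq c p) mulrnDr mulrnA mulrnAC zp mul0rn add0r. Qed.

Lemma mulrn_eq1_mod z p c : z *+ p = 0 -> c = 1 %[mod p] -> z *+ c = z.
Proof. by move=> zp c_mod; rewrite -(mulrn_modn c zp) c_mod mulrn_modn. Qed.

(* Descent on N: replacing N by [gcdn N c] with [c = 1 mod pdiv N] strictly shrinks it. *)
Lemma torsion_eq0 z N : (0 < N)%N -> z *+ N = 0 ->
  (forall p, prime p -> (p %| N)%N -> exists2 c, c = 1 %[mod p] & z *+ c = 0) ->
  z = 0.
Proof.
elim/ltn_ind: N => N IHN N_gt0 zN hN.
have [N_le1|N_gt1] := leqP N 1; first by rewrite -[z]mulr1n; have -> : 1%N = N by lia.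
have p_pr := pdiv_prime N_gt1; have pN := pdiv_dvd N.
have [c c_mod zc] := hN _ p_pr pN.
have p_ndvd_c : ~~ (pdiv N %| c)%N by rewrite /dvdn c_mod modn_small // prime_gt1.
apply: (IHN (gcdn N c)); rewrite ?gcdn_gt0 ?N_gt0 //.
- rewrite ltn_neqAle dvdn_leq ?dvdn_gcdl // andbT; apply: contraNneq p_ndvd_c => dN.
  by rewrite (dvdn_trans pN) // -{1}dN dvdn_gcdr.
- exact: mulrn_gcd_eq0.
- by move=> q q_pr /dvdn_trans/(_ (dvdn_gcdl _ _)); apply: hN.
Qed.

Lemma morph_add0 (U : zmodType) (f : U -> V) : {morph f : x y / x + y} -> f 0 = 0.
Proof. by move=> fD; apply: (addrI (f 0)); rewrite -fD !addr0. Qed.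

Lemma morph_addMn (U : zmodType) (f : U -> V) : {morph f : x y / x + y} ->
  forall x n, f (x *+ n) = f x *+ n.
Proof.
move=> fD x; elim=> [|n IHn]; first by rewrite !mulr0n (morph_add0 fD).
by rewrite !mulrS fD IHn.
Qed.

End Torsion.

Lemma pfactor_gt1 p e : prime p -> 0 < e -> 1 < p ^ e.
Proof. by move=> p_pr e_gt0; rewrite -{1}(expn0 p) ltn_exp2l // prime_gt1. Qed.

Definition prime_power n := (1 < n) && (n == pdiv n ^ logn (pdiv n) n).

Lemma prime_powerP n :
  reflect (exists p e, [/\ prime p, 0 < e & n = p ^ e]) (prime_power n).
Proof.
apply: (iffP andP) => [[n_gt1 /eqP def_n]|[p [e [p_pr e_gt0 ->]]]].
  exists (pdiv n), (logn (pdiv n) n); split; rewrite ?pdiv_prime //.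
  by move: n_gt1; rewrite [in X in X -> _]def_n; case: (logn _ _).
case: e e_gt0 => // e _; rewrite pdiv_pfactor // pfactorK //.
by rewrite -{1}(exp1n e.+1) ltn_exp2r // prime_gt1.
Qed.

Section PhiN.
Variables (R : comPzRingType) (M : lmodType R) (phi : nat -> M -> M).
Local Open Scope ring_scope.

Lemma phinE n x : phin phi n x =
  if n == 1%N then x else if prime_power n then iter (logn (pdiv n) n) (phi (pdiv n)) x else 0.
Proof. by []. Qed.

Lemma phin_pfactor p e x : prime p -> phin phi (p ^ e) x = iter e (phi p) x.
Proof.
move=> p_pr; case: e => [|e]; first by rewrite expn0.
have ppow : prime_power (p ^ e.+1) by apply/prime_powerP; exists p, e.+1.
have /andP[pe_gt1 _] := ppow.
by rewrite phinE (gtn_eqF pe_gt1) ppow pdiv_pfactor // pfactorK.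
Qed.

Lemma phin_prime p x : prime p -> phin phi p x = phi p x.
Proof. by move=> p_pr; rewrite -{1}(expn1 p) phin_pfactor. Qed.

Lemma phin_nonppow n x : n != 1%N -> ~~ prime_power n -> phin phi n x = 0.
Proof. by move=> /negbTE n_neq1 /negbTE nppow; rewrite phinE n_neq1 nppow. Qed.

Lemma phin_morph (N : lmodType R) (psi : nat -> N -> N) (f : M -> N) n x :
  {morph f : x y / x + y} -> (forall p x, prime p -> f (phi p x) = psi p (f x)) ->
  f (phin phi n x) = phin psi n (f x).
Proof.
move=> fD f_phi; rewrite /phin; case: ifP => // _; case: ifP => [/andP[n_gt1 _]|_].
  by elim: (logn _ _) => //= k <-; rewrite f_phi ?pdiv_prime.
exact: morph_add0.
Qed.

End PhiN.

Section U0Module.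
Variables (R : comPzRingType) (M : lmodType R) (phi : nat -> M -> M).
Hypothesis phiU : isU0Mod phi.
Local Open Scope ring_scope.

Lemma iter_phiD p e : prime p -> {morph iter e (phi p) : x y / x + y}.
Proof. by case: phiU => phiD _ _ _ p_pr x y; elim: e => //= e ->; rewrite phiD. Qed.

Lemma iter_phiZ p e (r : R) x : prime p ->
  iter e (phi p) (r *: x) = r ^+ (p ^ e)%N *: iter e (phi p) x.
Proof.
case: phiU => _ _ _ phiZ p_pr; elim: e => [|e IHe] /=; first by rewrite expr1.
by rewrite IHe phiZ // -exprM expnSr.
Qed.

Lemma iter_phi_char p e x : prime p -> (0 < e)%N -> iter e (phi p) x *+ p = 0.
Proof. by case: phiU => _ _ phi_char _ p_pr; case: e => // e _; apply: phi_char. Qed.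

Lemma iter_phi_coprime_eq0 p q e f x : prime p -> prime q -> p != q ->
  (0 < e)%N -> (0 < f)%N -> iter e (phi p) (iter f (phi q) x) = 0.
Proof.
move=> p_pr q_pr p_neq_q e_gt0 f_gt0.
have cop_pq : coprime p q by rewrite prime_coprime // dvdn_prime2.
apply: (mulrn_coprime_eq0 cop_pq); first exact: iter_phi_char.
have phiD := iter_phiD e p_pr.
by rewrite -(morph_addMn phiD) iter_phi_char // (morph_add0 phiD).
Qed.

Lemma phinD n : {morph phin phi n : x y / x + y}.
Proof.
move=> x y; rewrite !phinE; case: ifP => // _; case: ifP => [/andP[n_gt1 _]|_].
  exact/iter_phiD/pdiv_prime.
by rewrite addr0.
Qed.

Lemma phinZ n (r : R) x : (0 < n)%N -> phin phi n (r *: x) = r ^+ n *: phin phi n x.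
Proof.
move=> n_gt0; have [->|n_neq1] := eqVneq n 1%N; first by rewrite !phinE expr1.
have [/prime_powerP[p [e [p_pr _ ->]]]|nppow] := boolP (prime_power n).
  by rewrite !phin_pfactor // iter_phiZ.
by rewrite !phin_nonppow // scaler0.
Qed.

(* For [m + n = p ^ e], the prime p divides the binomial coefficient and kills [phi p]. *)
Lemma phin_bin m n x : (0 < m)%N -> (0 < n)%N -> phin phi (m + n)%N x *+ 'C(m + n, m) = 0.
Proof.
move=> m_gt0 n_gt0; have [/prime_powerP[p [e [p_pr e_gt0 def_mn]]]|nppow] :=
  boolP (prime_power (m + n)); last by rewrite phin_nonppow ?mul0rn //; lia.
rewrite def_mn phin_pfactor //; have /dvdnP[c ->] : (p %| 'C(p ^ e, m))%N.
  by apply: prime_dvd_bin_pfactor; rewrite // m_gt0 -def_mn; lia.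
by rewrite mulrnA mulrnAC iter_phi_char // mul0rn.
Qed.

Lemma phin_comp m n x : (0 < m)%N -> (0 < n)%N ->
  phin phi m (phin phi n x) = phin phi (m * n)%N x *+ comp_coef n m.
Proof.
move=> m_gt0 n_gt0; have [->|m_neq1] := eqVneq m 1%N.
  by rewrite mul1n comp_coefn1 mulr1n.
have [->|n_neq1] := eqVneq n 1%N; first by rewrite muln1 comp_coef1n mulr1n.
have [/prime_powerP[r [k [r_pr k_gt0 def_mn]]]|nppow] := boolP (prime_power (m * n)).
  have /(dvdn_pfactor _ _ r_pr)[e _ def_m] : (m %| r ^ k)%N by rewrite -def_mn dvdn_mulr.
  have /(dvdn_pfactor _ _ r_pr)[f _ def_n] : (n %| r ^ k)%N by rewrite -def_mn dvdn_mull.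
  rewrite def_m def_n -expnD !phin_pfactor // -iterD; apply/esym/mulrn_eq1_mod.
    by apply: iter_phi_char; move: m_neq1; rewrite def_m; case: (e).
  exact: comp_coef_pfactor_mod.
have -> : phin phi (m * n)%N x = 0.
  by apply: phin_nonppow; rewrite // muln_eq1 negb_and m_neq1.
rewrite mul0rn.
have [/prime_powerP[q [f [q_pr f_gt0 def_n]]]|] := boolP (prime_power n); last first.
  by move=> nppow_n; rewrite (phin_nonppow phi x n_neq1 nppow_n) (morph_add0 (phinD m)).
have [/prime_powerP[p [e [p_pr e_gt0 def_m]]]|] := boolP (prime_power m); last first.
  exact: phin_nonppow.
have [p_eq_q|p_neq_q] := eqVneq p q.
  case/negP: nppow; apply/prime_powerP; exists q, (e + f)%N.
  by rewrite addn_gt0 e_gt0 def_m def_n p_eq_q expnD.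
by rewrite def_m def_n !phin_pfactor // iter_phi_coprime_eq0.
Qed.

Lemma isDPAlg_phin : isDPAlg (@zmul R M) (phin phi).
Proof.
split=> //; first by move=> *; rewrite /zmul addr0.
  by move=> *; rewrite /zmul scaler0.
split=> [|n x y _|n r x|m n x m_gt0 n_gt0|m n x m_gt0 n_gt0].
- by split=> // n x y _; rewrite phinD big1 ?addr0.
- by rewrite /zmul (morph_add0 (phinD n)).
- exact: phinZ.
- by rewrite /zmul phin_bin.
- by rewrite comp_coefE // phin_comp.
Qed.

End U0Module.

Section DPZeroProduct.
Variables (R : comPzRingType) (A : lmodType R) (gamma : nat -> A -> A).
Hypothesis gammaDP : isDPAlg (@zmul R A) gamma.
Local Open Scope ring_scope.

Lemma gamma1 x : gamma 1 x = x.
Proof. by case: gammaDP => _ _ _ _ [[]]. Qed.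

Lemma gammaD n : (0 < n)%N -> {morph gamma n : x y / x + y}.
Proof.
by case: gammaDP => _ _ _ _ [[_ gammaD] _ _ _ _] n_gt0 x y; rewrite gammaD // big1 ?addr0.
Qed.

Lemma gammaZ n (r : R) x : (0 < n)%N -> gamma n (r *: x) = r ^+ n *: gamma n x.
Proof. by case: gammaDP => _ _ _ _ [_ _ gammaZ _ _]; apply: gammaZ. Qed.

Lemma gamma_mulrn n x k : (0 < n)%N -> gamma n (x *+ k) = gamma n x *+ (k ^ n).
Proof. by move=> n_gt0; rewrite -scaler_nat gammaZ // -natrX scaler_nat. Qed.

(* [gamma 1 x * gamma (n - 1) x = n gamma n x] and the product is zero. *)
Lemma gamma_char n x : (1 < n)%N -> gamma n x *+ n = 0.
Proof.
case: gammaDP => _ _ _ _ [_ _ _ gamma_mul _] n_gt1.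
have n_pred_gt0 : (0 < n.-1)%N by lia.
by have := gamma_mul 1%N n.-1 x isT n_pred_gt0; rewrite add1n prednK ?bin1 1?ltnW // => <-.
Qed.

Lemma gamma_comp m n x : (0 < m)%N -> (0 < n)%N ->
  gamma m (gamma n x) = gamma (m * n)%N x *+ comp_coef n m.
Proof.
by case: gammaDP => _ _ _ _ [_ _ _ _ gamma_comp] m_gt0 n_gt0; rewrite gamma_comp // comp_coefE.
Qed.

Lemma gamma_coprime_eq0 m k y : (1 < m)%N -> coprime m k -> y *+ k = 0 -> gamma m y = 0.
Proof.
move=> m_gt1 cop_mk yk; apply: (mulrn_coprime_eq0 (coprimeXr m cop_mk)).
  exact: gamma_char.
by rewrite -gamma_mulrn 1?ltnW // yk (morph_add0 (gammaD (ltnW m_gt1))).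
Qed.

(* Composing [gamma p] with [gamma (p ^ e)] gives [gamma (p ^ e.+1)] up to a
   coefficient that is 1 mod p; the same coefficient shows [p] kills it. *)
Lemma gamma_pfactor p e x : prime p -> gamma (p ^ e) x = iter e (gamma p) x.
Proof.
move=> p_pr; elim: e => [|e IHe]; first exact: gamma1.
set z := gamma (p ^ e.+1) x; set c := comp_coef (p ^ e) p.
have comp_p : gamma p (gamma (p ^ e) x) = z *+ c.
  by rewrite gamma_comp ?expn_gt0 ?prime_gt0 // -expnS.
have c_mod : c = 1 %[mod p] := comp_coef_pfactor_mod e p p_pr.
have zp : z *+ p = 0.
  have cop : coprime c (p ^ e) by rewrite coprimeXr // -coprime_modl c_mod coprime_modl coprime1n.
  apply: (mulrn_coprime_eq0 cop); first by rewrite mulrnAC -comp_p gamma_char ?prime_gt1.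
  by rewrite -mulrnA -expnS gamma_char // pfactor_gt1.
by rewrite iterS -IHe comp_p (mulrn_eq1_mod zp c_mod).
Qed.

(* Write [n = m * p ^ e] with [p] prime to [m > 1]: then [gamma m] kills the
   [p ^ e]-torsion element [gamma (p ^ e) x], and that composite is a
   multiple of [gamma n x] by a number that is 1 mod [p]. *)
Lemma gamma_nonppow n x : (1 < n)%N -> ~~ prime_power n -> gamma n x = 0.
Proof.
move=> n_gt1 nppow; apply: (torsion_eq0 (ltnW n_gt1) (gamma_char x n_gt1)) => p p_pr p_dvd_n.
have [m cop_pm def_n] := pfactor_coprime p_pr (ltnW n_gt1).
set e := logn p n in def_n.
have e_gt0 : (0 < e)%N by rewrite logn_gt0 mem_primes p_pr p_dvd_n ltnW.
have m_gt1 : (1 < m)%N.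
  case: m def_n {cop_pm} => [|[|m]] def_n //; first by rewrite def_n in n_gt1.
  by case/negP: nppow; apply/prime_powerP; exists p, e; rewrite def_n mul1n.
exists (comp_coef (p ^ e) m); first exact: comp_coef_pfactor_mod.
rewrite {1}def_n -gamma_comp ?(ltnW m_gt1) ?expn_gt0 ?prime_gt0 //.
apply: (gamma_coprime_eq0 m_gt1 (k := p ^ e)); first by rewrite coprimeXr // coprime_sym.
by rewrite gamma_char // pfactor_gt1.
Qed.

Lemma phin_gamma n x : (0 < n)%N -> phin gamma n x = gamma n x.
Proof.
move=> n_gt0; have [->|n_neq1] := eqVneq n 1%N; first by rewrite gamma1.
have [/prime_powerP[p [e [p_pr _ ->]]]|nppow] := boolP (prime_power n).
  by rewrite phin_pfactor // gamma_pfactor.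
by rewrite phin_nonppow // gamma_nonppow //; lia.
Qed.

Lemma isU0Mod_gamma : isU0Mod gamma.
Proof.
split=> [p x y /prime_gt0/gammaD-> // | p q x p_pr q_pr |
          p x /prime_gt1/gamma_char // | p r x /prime_gt0/gammaZ //].
have [-> //|p_neq_q] := eqVneq p q.
have cop_pq : coprime p q by rewrite prime_coprime // dvdn_prime2.
rewrite !(gamma_coprime_eq0 (prime_gt1 _) _ (gamma_char _ (prime_gt1 _))) //.
by rewrite coprime_sym.
Qed.

End DPZeroProduct.

Unset Implicit Arguments.
Local Open Scope ring_scope.

Theorem mainTheorem3 (R : comPzRingType) :
  (forall (A : lmodType R) (gamma : nat -> A -> A),
     isDPAlg (@zmul R A) gamma -> isU0Mod gamma)
  /\
  (forall (M : lmodType R) (phi : nat -> M -> M),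
     isU0Mod phi -> isDPAlg (@zmul R M) (phin phi))
  /\
  (forall (A : lmodType R) (gamma : nat -> A -> A),
     isDPAlg (@zmul R A) gamma ->
     forall (n : nat) (a : A), (0 < n)%N -> phin gamma n a = gamma n a)
  /\
  (forall (M : lmodType R) (phi : nat -> M -> M),
     isU0Mod phi -> forall (p : nat) (x : M), prime p -> phin phi p x = phi p x)
  /\
  (* both functors are the identity on underlying maps *)
  (forall (A B : lmodType R) (gA : nat -> A -> A) (gB : nat -> B -> B) (f : A -> B),
     isDPAlg (@zmul R A) gA -> isDPAlg (@zmul R B) gB ->
     (isDPMap (@zmul R A) gA (@zmul R B) gB f <-> isU0Map gA gB f)).
Proof.
split; first exact: isU0Mod_gamma.
split; first exact: isDPAlg_phin.
split; first exact: phin_gamma.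
split; first by move=> M phi _ p x; apply: phin_prime.
move=> A B gA gB f gA_DP gB_DP; split=> [[fD fZ _ f_gamma]|[fD fZ f_phi]].
  by split=> // p x /prime_gt0; apply: f_gamma.
split=> // [x y|n x n_gt0]; first exact: morph_add0.
by rewrite -(phin_gamma gA_DP) // -(phin_gamma gB_DP) //; apply: phin_morph.
Qed.
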